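(* Let the columns of $K_1 = [ Y_1^\top \ X_1^\top ]^\top$, with $Y_1$ square and nonsingular, solve the generalized eigenvalue problem $M_1K_1 = M_2^\top K_1 \Lambda$. Then $L_1 = X_1Y_1^{-1}$ solves \[ A_2^\top L_1+B_2^\top = (B_1 +D_1L_1)(A_1 + B_1^\top L_1)^{-1}(D_2^\top + B_2L_1). \]
   Context: Two-player quadratic game with cost blocks $A_i\succ 0$, $B_i\in\mathbb{R}^{d_{-i}\times d_i}$, $D_i$ for player $i$ (cost $f_i=\tfrac12[x_i;x_{-i}]^\top\begin{bmatrix}A_i & B_i^\top\\ B_i& D_i\end{bmatrix}[x_i;x_{-i}]+a_i^\top x_i+b_i^\top x_{-i}$). $M_1=\begin{bmatrix}A_1 & B_1^\top\\ B_1 & D_1\end{bmatrix}$, $M_2=\begin{bmatrix}D_2 & B_2\\ B_2^\top & A_2\end{bmatrix}$ are invertible, $K_1\in\mathbb{C}^{d\times d_1}$, $Y_1\in\mathbb{C}^{d_1\times d_1}$, $X_1\in\mathbb{C}^{d_2\times d_1}$. The displayed equation is the rearranged fixed-point condition of player 1's composite conjecture update $L_1^+ = -\big(A_{2}^\top - (B_1 +D_1L_1)(A_1 + B_1^\top L_1)^{-1} B_{2}\big)^{-1}\big(B_{2}^\top - (B_1 +D_1L_1)(A_1 + B_1^\top L_1)^{-1} D_{2}^\top\big)$. *)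

From HB Require Import structures.
From mathcomp Require Import all_boot all_order all_algebra.
From mathcomp Require Import complex.
Set Implicit Arguments. Unset Strict Implicit. Unset Printing Implicit Defensive.
Import Order.TTheory GRing.Theory Num.Theory.
Local Open Scope ring_scope.

(* Real matrices live over an abstract real closed field R; complex
   matrices over R[i].  toC embeds real matrices into complex ones. *)
Definition toC (R : rcfType) (m n : nat) (A : 'M[R]_(m, n)) : 'M[R[i]]_(m, n) :=
  map_mx (fun x : R => (x%:C)%C) A.

Definition posdef (R : rcfType) (n : nat) (A : 'M[R]_n) : Prop :=
  A^T = A /\ forall x : 'cV[R]_n, x != 0 -> 0 < (x^T *m A *m x) 0 0.

Definition M1mx (R : rcfType) (d1 d2 : nat) (A1 : 'M[R]_d1) (B1 : 'M[R]_(d2, d1))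
  (D1 : 'M[R]_d2) : 'M[R]_(d1 + d2) := block_mx A1 B1^T B1 D1.

Definition M2mx (R : rcfType) (d1 d2 : nat) (A2 : 'M[R]_d2) (B2 : 'M[R]_(d1, d2))
  (D2 : 'M[R]_d1) : 'M[R]_(d1 + d2) := block_mx D2 B2 B2^T A2.

From HB Require Import structures.
From mathcomp Require Import all_boot all_order all_algebra.
From mathcomp Require Import complex.
Import Order.TTheory GRing.Theory Num.Theory.
Local Open Scope ring_scope.

(* With L = X Y^-1 and T = Y Lam Y^-1, the two block rows of M1 K = M2^T K Lam
   read  A1 + B1^T L = (D2^T + B2 L) T  and  B1 + D1 L = (B2^T + A2^T L) T.
   Since the first left-hand side is invertible, so is D2^T + B2 L, with
   inverse T (A1 + B1^T L)^-1; multiplying the second identity on the right by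
   (A1 + B1^T L)^-1 (D2^T + B2 L) therefore gives the Riccati equation. *)

Lemma toC_block (R : rcfType) m1 m2 n1 n2 (A : 'M[R]_(m1, n1)) (B : 'M[R]_(m1, n2))
    (C : 'M[R]_(m2, n1)) (D : 'M[R]_(m2, n2)) :
  toC (block_mx A B C D) = block_mx (toC A) (toC B) (toC C) (toC D).
Proof. exact: map_block_mx. Qed.

Section BlockRiccati.

Context {R : comUnitRingType} {n1 n2 : nat}.

Lemma mulmx_invmx_mulr (Q T : 'M[R]_n1) :
  Q *m T \in unitmx -> T *m invmx (Q *m T) = invmx Q.
Proof.
move=> uQT; have uQ : Q \in unitmx by move: uQT; rewrite unitmx_mul => /andP[].
by rewrite -{1}[T](mulKmx uQ) -!mulmxA (mulmxA Q) mulmxV ?mulmx1.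
Qed.

Lemma mul_row_col_invmx m (Y : 'M[R]_n1) (X : 'M[R]_(n2, n1))
    (A : 'M[R]_(m, n1)) (B : 'M[R]_(m, n2)) :
  Y \in unitmx -> (A *m Y + B *m X) *m invmx Y = A + B *m (X *m invmx Y).
Proof. by move=> uY; rewrite mulmxDl mulmxK // mulmxA. Qed.

Context {A E : 'M[R]_n1} {B F : 'M[R]_(n1, n2)}
  {C G : 'M[R]_(n2, n1)} {D H : 'M[R]_n2}
  {Y Lam : 'M[R]_n1} {X : 'M[R]_(n2, n1)}.

Hypothesis unit_Y : Y \in unitmx.
Hypothesis eigen_eq :
  block_mx A B C D *m col_mx Y X = block_mx E F G H *m col_mx Y X *m Lam.

Let L := X *m invmx Y.
Let T := Y *m Lam *m invmx Y.

Lemma block_eigen_rows :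
  A + B *m L = (E + F *m L) *m T /\ C + D *m L = (G + H *m L) *m T.
Proof.
have row_eq m (M N : 'M[R]_(m, n1)) (M' N' : 'M[R]_(m, n2)) :
    M *m Y + M' *m X = (N *m Y + N' *m X) *m Lam ->
    M + M' *m L = (N + N' *m L) *m T.
  move=> eq_MN; rewrite /L -mul_row_col_invmx // eq_MN /T.
  rewrite [RHS]mulmxA [in RHS]mulmxA; congr (_ *m _ *m _).
  by rewrite mulmxDl mulmxA mulmxKV.
move: eigen_eq; rewrite !mul_block_col mul_col_mx => /eq_col_mx[eq_up eq_dn].
by split; apply: row_eq.
Qed.

Lemma block_eigen_riccati :
  A + B *m L \in unitmx ->
  G + H *m L = (C + D *m L) *m invmx (A + B *m L) *m (E + F *m L).
Proof.
have [-> ->] := block_eigen_rows => uQT.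
have uQ : E + F *m L \in unitmx by move: uQT; rewrite unitmx_mul => /andP[].
by rewrite -(mulmxA _ T) mulmx_invmx_mulr // -mulmxA mulVmx ?mulmx1.
Qed.

End BlockRiccati.

Theorem proposition3 (R : rcfType) (d1 d2 : nat)
  (A1 : 'M[R]_d1) (B1 : 'M[R]_(d2, d1)) (D1 : 'M[R]_d2)
  (A2 : 'M[R]_d2) (B2 : 'M[R]_(d1, d2)) (D2 : 'M[R]_d1)
  (Y1 : 'M[R[i]]_d1) (X1 : 'M[R[i]]_(d2, d1)) (lam : 'rV[R[i]]_d1) :
  posdef A1 -> posdef A2 ->
  M1mx A1 B1 D1 \in unitmx -> M2mx A2 B2 D2 \in unitmx ->
  Y1 \in unitmx ->
  toC (M1mx A1 B1 D1) *m col_mx Y1 X1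
    = toC (M2mx A2 B2 D2)^T *m col_mx Y1 X1 *m diag_mx lam ->
  let L1 := X1 *m invmx Y1 in
  toC A1 + toC B1^T *m L1 \in unitmx ->
  toC A2^T *m L1 + toC B2^T
    = (toC B1 + toC D1 *m L1) *m invmx (toC A1 + toC B1^T *m L1)
        *m (toC D2^T + toC B2 *m L1).
Proof.
move=> _ _ _ _ unit_Y1 + L1 unit_P.
rewrite /M1mx /M2mx tr_block_mx trmxK !toC_block => eigen_eq.
by rewrite addrC (block_eigen_riccati unit_Y1 eigen_eq unit_P).
Qed.
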